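(* Consider any correlated multi-secret sharing scheme $p_{M_{12}M_{23}M_{31}|XYZ}$ for a joint distribution $p_{XYZ}$ with full support on $\mathcal X\times\mathcal Y\times\mathcal Z$. Then (1) $H(M_{12})\ge\max\{\sup_{p_{X'Y'Z'}}(RI(X';Z')+H(X',Y'|Z')),\ \sup_{p_{X'Y'Z'}}(RI(Y';Z')+H(X',Y'|Z'))\}$, where the suprema are over distributions $p_{X'Y'Z'}$ for which the characteristic bipartite graph of $p_{X'Y'}$ is connected; (2) $H(M_{23})\ge\max\{\sup_{p_{X'Y'Z'}}(RI(X';Z')+H(Y',Z'|X')),\ \sup_{p_{X'Y'Z'}}(RI(X';Y')+H(Y',Z'|X'))\}$, where the suprema are over distributions $p_{X'Y'Z'}$ for which the characteristic bipartite graph of $p_{Y'Z'}$ is connected; (3) $H(M_{31})\ge\max\{\sup_{p_{X'Y'Z'}}(RI(Y';Z')+H(X',Z'|Y')),\ \sup_{p_{X'Y'Z'}}(RI(X';Y')+H(X',Z'|Y'))\}$, where the suprema are over distributions $p_{X'Y'Z'}$ for which the characteristic bipartite graph of $p_{X'Z'}$ is connected. The left-hand sides are computed under $p_{XYZ}$ and the scheme; the right-hand sides are computed under $p_{X'Y'Z'}$.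
   Context: A correlated multi-secret sharing (CMSS) scheme for a joint distribution $p_{XYZ}$ on finite sets is a conditional distribution $p_{M_{12}M_{23}M_{31}|XYZ}$ mapping secrets $(X,Y,Z)\sim p_{XYZ}$ probabilistically to shares $(M_{12},M_{23},M_{31})$ such that (correctness) $H(X|M_{12},M_{31})=H(Y|M_{12},M_{23})=H(Z|M_{23},M_{31})=0$ and (privacy) $I((M_{12},M_{31});(Y,Z)|X)=0$, $I((M_{12},M_{23});(X,Z)|Y)=0$, $I((M_{23},M_{31});(X,Y)|Z)=0$. The characteristic bipartite graph of a distribution $p_{UV}$ on $\mathcal U\times\mathcal V$ has vertex set $\mathcal U\cup\mathcal V$ with $u,v$ adjacent iff $p_{UV}(u,v)>0$. Residual information: $RI(U;V)=I(U;V)-H(U\sqcap V)$, where $U\sqcap V$ has maximum entropy among random variables of the form $f(U)=g(V)$ for deterministic $f,g$. *)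

From HB Require Import structures.
From mathcomp Require Import all_boot all_order all_algebra.
From mathcomp Require Import reals exp.
Set Implicit Arguments. Unset Strict Implicit. Unset Printing Implicit Defensive.
Import Order.TTheory GRing.Theory Num.Theory.
Local Open Scope ring_scope.

Definition is_dist (R : realType) (T : finType) (P : T -> R) : Prop :=
  (forall t, 0 <= P t) /\ \sum_(t : T) P t = 1.

(* Random variables are functions on the finite sample space [Om] under [P]. *)
Definition pmf (R : realType) (Om A : finType) (P : Om -> R) (f : Om -> A)
  (a : A) : R := \sum_(w : Om | f w == a) P w.

(* Shannon entropy (natural log; base is irrelevant for the inequalities). *)
Definition entropy (R : realType) (Om A : finType) (P : Om -> R) (f : Om -> A) : R :=
  - \sum_(a : A) pmf P f a * ln (pmf P f a).

Definition rvpair (Om A B : finType) (f : Om -> A) (g : Om -> B) : Om -> A * B :=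
  fun w => (f w, g w).

Definition condH (R : realType) (Om A B : finType) (P : Om -> R)
  (f : Om -> A) (g : Om -> B) : R :=
  entropy P (rvpair f g) - entropy P g.

Definition MI (R : realType) (Om A B : finType) (P : Om -> R)
  (f : Om -> A) (g : Om -> B) : R :=
  entropy P f + entropy P g - entropy P (rvpair f g).

Definition condMI (R : realType) (Om A B C : finType) (P : Om -> R)
  (f : Om -> A) (g : Om -> B) (h : Om -> C) : R :=
  condH P f h - condH P f (rvpair g h).

(* H(U ⊓ V): maximum entropy of a random variable of the form
   f(U) = g(V) (almost surely).  The codomain is taken to be the alphabet
   of U, which loses no generality since f(U) takes at most |U| values. *)
Definition common_entropy (R : realType) (Om A B : finType) (P : Om -> R)
  (u : Om -> A) (v : Om -> B) : R :=
  \big[Num.max/0]_(fg : {ffun A -> A} * {ffun B -> A} |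
        [forall w : Om, (0 < P w) ==> (fg.1 (u w) == fg.2 (v w))])
     entropy P (fun w => fg.1 (u w)).

Definition RI (R : realType) (Om A B : finType) (P : Om -> R)
  (u : Om -> A) (v : Om -> B) : R :=
  MI P u v - common_entropy P u v.

Definition char_graph (R : realType) (Om A B : finType) (P : Om -> R)
  (u : Om -> A) (v : Om -> B) : rel (A + B) :=
  fun s t => match s, t with
    | inl a, inr b => 0 < pmf P (rvpair u v) (a, b)
    | inr b, inl a => 0 < pmf P (rvpair u v) (a, b)
    | _, _ => false
    end.

Definition char_graph_connected (R : realType) (Om A B : finType) (P : Om -> R)
  (u : Om -> A) (v : Om -> B) : Prop :=
  forall s t : A + B, connect (char_graph P u v) s t.

Definition sX (X Y Z : finType) (s : X * Y * Z) : X := s.1.1.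
Definition sY (X Y Z : finType) (s : X * Y * Z) : Y := s.1.2.
Definition sZ (X Y Z : finType) (s : X * Y * Z) : Z := s.2.

Definition joint (R : realType) (X Y Z M12 M23 M31 : finType)
  (p : X * Y * Z -> R) (K : X * Y * Z -> M12 * M23 * M31 -> R)
  : (X * Y * Z) * (M12 * M23 * M31) -> R :=
  fun w => p w.1 * K w.1 w.2.

Section Coords.
Variables (X Y Z M12 M23 M31 : finType).
Definition jX (w : (X * Y * Z) * (M12 * M23 * M31)) : X := w.1.1.1.
Definition jY (w : (X * Y * Z) * (M12 * M23 * M31)) : Y := w.1.1.2.
Definition jZ (w : (X * Y * Z) * (M12 * M23 * M31)) : Z := w.1.2.
Definition jM12 (w : (X * Y * Z) * (M12 * M23 * M31)) : M12 := w.2.1.1.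
Definition jM23 (w : (X * Y * Z) * (M12 * M23 * M31)) : M23 := w.2.1.2.
Definition jM31 (w : (X * Y * Z) * (M12 * M23 * M31)) : M31 := w.2.2.
End Coords.

Definition is_CMSS (R : realType) (X Y Z M12 M23 M31 : finType)
  (p : X * Y * Z -> R) (K : X * Y * Z -> M12 * M23 * M31 -> R) : Prop :=
  let P := joint p K in
  let x := @jX X Y Z M12 M23 M31 in let y := @jY X Y Z M12 M23 M31 in
  let z := @jZ X Y Z M12 M23 M31 in let m12 := @jM12 X Y Z M12 M23 M31 in
  let m23 := @jM23 X Y Z M12 M23 M31 in let m31 := @jM31 X Y Z M12 M23 M31 in
  [/\ (forall s, is_dist (K s)),
      condH P x (rvpair m12 m31) = 0,
      condH P y (rvpair m12 m23) = 0,
      condH P z (rvpair m23 m31) = 0 &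
      [/\ condMI P (rvpair m12 m31) (rvpair y z) x = 0,
          condMI P (rvpair m12 m23) (rvpair x z) y = 0 &
          condMI P (rvpair m23 m31) (rvpair x y) z = 0]].

From HB Require Import structures.
From mathcomp Require Import all_boot all_order all_algebra.
From mathcomp Require Import reals exp.
From mathcomp Require Import ring lra.
Import Order.TTheory GRing.Theory Num.Theory.
Local Open Scope ring_scope.

Set Implicit Arguments. Unset Strict Implicit. Unset Printing Implicit Defensive.

(* With [p] of full support, privacy forces the kernel marginal of each pair of shares to
   depend only on the secret that pair reveals; every single share lies in two such pairs,
   so its marginal does not depend on the secrets at all. Correctness only constrains the
   support of the kernel, hence the same kernel is a scheme for every input distribution
   [q], with the same share entropies. Under [q], for the share M12 and T = (M23, M31):
   H(X,Y|Z) = H(X,Y|T) <= H(M12|T), by the privacy of Z and since (M12, T) recovers (X, Y);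
   I(X;Z) <= I(X;T) = I(X;M23|M31) <= I(M12;M23|M31), since M31 is independent of X and
   (M12, M31) recovers X. Adding up gives H(M12|M31) <= H(M12). This even bounds I(X;Z),
   which is at least RI(X;Z). *)

Section LogInequalities.
Variables (R : realType) (x y : R).
Hypotheses (x_ge0 : 0 <= x) (y_ge0 : 0 <= y) (supp_xy : 0 < x -> 0 < y).

Let ln_divV (xpos : 0 < x) : x * ln (x / y) = - (x * ln (y / x)).
Proof. by rewrite -[x / y]invf_div lnV ?posrE ?divr_gt0 ?supp_xy // mulrN. Qed.

Let mul_div_cancel (xpos : 0 < x) : x * (y / x) = y.
Proof. by rewrite mulrC divfK ?gt_eqF. Qed.

Lemma le_mul_ln_div : x - y <= x * ln (x / y).
Proof.
have [->|xpos] := eqVneq x 0; first by rewrite mul0r sub0r oppr_le0.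
have {xpos} xpos : 0 < x by rewrite lt_def xpos.
have ln_le : ln (y / x) <= y / x - 1.
  by have := expR_ge1Dx (ln (y / x)); rewrite lnK ?posrE ?divr_gt0 ?supp_xy //; lra.
have : x * ln (y / x) <= x * (y / x - 1) by rewrite ler_pM2l.
rewrite mulrBr mulr1 mul_div_cancel // ln_divV //; lra.
Qed.

Lemma eq_mul_ln_div : x * ln (x / y) = x - y -> x = y.
Proof.
have [->|xpos] := eqVneq x 0; first by rewrite mul0r => /eqP; rewrite eq_sym subr_eq0 => /eqP.
have {xpos} xpos : 0 < x by rewrite lt_def xpos.
rewrite ln_divV // => e; apply/eqP; apply/negPn/negP => x_neq_y.
have ratio_neq1 : y / x != 1.
  by apply: contra x_neq_y => /eqP/(congr1 ( *%R x)); rewrite mul_div_cancel // mulr1 => ->.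
have ln_lt : ln (y / x) < y / x - 1.
  have ratio_pos : 0 < y / x by rewrite divr_gt0 ?supp_xy.
  have := @expR_gt1Dx R (ln (y / x)); rewrite ln_eq0 // lnK ?posrE //.
  by move/(_ ratio_neq1); lra.
have : x * ln (y / x) < x * (y / x - 1) by rewrite ltr_pM2l.
rewrite mulrBr mulr1 mul_div_cancel //; lra.
Qed.
End LogInequalities.

Definition relative_entropy (R : realType) (T : finType) (p r : T -> R) : R :=
  \sum_t p t * ln (p t / r t).

Section RelativeEntropy.
Variables (R : realType) (T : finType) (p r : T -> R).
Hypotheses (p_ge0 : forall t, 0 <= p t) (r_ge0 : forall t, 0 <= r t).
Hypotheses (sum_r_le : \sum_t r t <= \sum_t p t) (supp_pr : forall t, 0 < p t -> 0 < r t).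

Let gibbs_gap t := p t * ln (p t / r t) - (p t - r t).

Let gibbs_gap_ge0 t : 0 <= gibbs_gap t.
Proof. by rewrite subr_ge0; apply: le_mul_ln_div; auto. Qed.

Let sum_gibbs_gap :
  \sum_t gibbs_gap t = relative_entropy p r - (\sum_t p t - \sum_t r t).
Proof. by rewrite sumrB sumrB. Qed.

Lemma relative_entropy_ge0 : 0 <= relative_entropy p r.
Proof.
have : 0 <= \sum_t gibbs_gap t by apply: sumr_ge0 => t _.
by rewrite sum_gibbs_gap subr_ge0; apply: le_trans; rewrite subr_ge0.
Qed.

Lemma relative_entropy_eq0 : relative_entropy p r = 0 -> p =1 r.
Proof.
move=> D0 t; apply: eq_mul_ln_div; auto; apply/eqP; rewrite -subr_eq0; apply/eqP.
apply: (psumr_eq0P (P := predT) (fun t _ => gibbs_gap_ge0 t)) => //.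
apply/eqP; rewrite eq_le; apply/andP; split; last by apply: sumr_ge0.
by rewrite sum_gibbs_gap D0 sub0r oppr_le0 subr_ge0.
Qed.

End RelativeEntropy.

Lemma sum_prod (V : nmodType) (I J : finType) (F : I * J -> V) :
  \sum_v F v = \sum_i \sum_j F (i, j).
Proof. by rewrite pair_bigA; apply: eq_bigr => -[]. Qed.

Section Pmf.
Variables (R : realType) (Om : finType) (P : Om -> R).

Lemma sum_pmf_mul (A : finType) (f : Om -> A) (G : A -> R) :
  \sum_a pmf P f a * G a = \sum_w P w * G (f w).
Proof.
rewrite (partition_big f predT) //=; apply: eq_bigr => a _.
by rewrite /pmf mulr_suml; apply: eq_bigr => w /eqP ->.
Qed.

Lemma sum_pmf (A : finType) (f : Om -> A) : \sum_a pmf P f a = \sum_w P w.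
Proof.
rewrite -(eq_bigr _ (fun a _ => mulr1 (pmf P f a))) sum_pmf_mul.
by apply: eq_bigr => w _; rewrite mulr1.
Qed.

Lemma sum_pmf_pair (A C : finType) (f : Om -> A) (h : Om -> C) c :
  \sum_a pmf P (rvpair f h) (a, c) = pmf P h c.
Proof.
rewrite /pmf (partition_big f predT) //=; apply: eq_bigr => a _; apply: eq_bigl => w.
by rewrite /rvpair xpair_eqE andbC.
Qed.

Lemma pmf_unit : pmf P (fun _ => tt) tt = \sum_w P w.
Proof. exact: eq_bigl. Qed.

Lemma pmf_comp (A B : finType) (f : Om -> A) (phi : A -> B) b :
  pmf P (fun w => phi (f w)) b = \sum_(a | phi a == b) pmf P f a.
Proof.
rewrite /pmf (partition_big f (fun a => phi a == b)) //.
apply: eq_bigr => a /eqP phi_a; apply: eq_bigl => w.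
by case: (f w =P a) => [->|]; rewrite ?andbF ?phi_a ?eqxx.
Qed.

Lemma entropyE (A : finType) (f : Om -> A) :
  entropy P f = - \sum_w P w * ln (pmf P f (f w)).
Proof. by rewrite /entropy sum_pmf_mul. Qed.

Hypothesis P_ge0 : forall w, 0 <= P w.

Lemma pmf_ge0 (A : finType) (f : Om -> A) a : 0 <= pmf P f a.
Proof. exact: sumr_ge0. Qed.

Lemma le_pmf_comp (A B : finType) (f : Om -> A) (h : Om -> B) (phi : A -> B) a :
  (forall w, h w = phi (f w)) -> pmf P f a <= pmf P h (phi a).
Proof.
move=> hE; rewrite /pmf big_mkcond [leRHS]big_mkcond /= ler_sum // => w _.
by rewrite hE; case: eqP => [->|_]; rewrite ?eqxx //; case: ifP.
Qed.

Lemma le_prob_pmf (A : finType) (f : Om -> A) w : P w <= pmf P f (f w).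
Proof. by rewrite /pmf (bigD1 w) //= lerDl sumr_ge0. Qed.

Lemma pmf_gt0 (A : finType) (f : Om -> A) w : 0 < P w -> 0 < pmf P f (f w).
Proof. by move/lt_le_trans; apply; apply: le_prob_pmf. Qed.

End Pmf.

Definition determines (R : realType) (Om A B : finType) (P : Om -> R)
  (g : Om -> B) (f : Om -> A) : Prop :=
  forall w w', 0 < P w -> 0 < P w' -> g w = g w' -> f w = f w'.

Section Determines.
Variables (R : realType) (Om : finType) (P : Om -> R).

Lemma determines_comp (A B : finType) (g : Om -> B) (phi : B -> A) :
  determines P g (fun w => phi (g w)).
Proof. by move=> w w' _ _ ->. Qed.

Lemma determines_refl (A : finType) (f : Om -> A) : determines P f f.
Proof. by move=> w w' _ _. Qed.

Lemma determines_trans (A B C : finType) (h : Om -> C) (g : Om -> B) (f : Om -> A) :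
  determines P h g -> determines P g f -> determines P h f.
Proof. by move=> hg gf w w' Pw Pw' e; apply: gf => //; apply: hg. Qed.

Lemma determines_pair (A B C : finType) (h : Om -> C) (f : Om -> A) (g : Om -> B) :
  determines P h f -> determines P h g -> determines P h (rvpair f g).
Proof. by move=> hf hg w w' Pw Pw' e; rewrite /rvpair (hf w w') ?(hg w w'). Qed.

Lemma determines_fst (A B : finType) (f : Om -> A) (g : Om -> B) :
  determines P (rvpair f g) f.
Proof. by move=> w w' _ _ [->]. Qed.

Lemma determines_snd (A B : finType) (f : Om -> A) (g : Om -> B) :
  determines P (rvpair f g) g.
Proof. by move=> w w' _ _ [_ ->]. Qed.

Lemma determines_swap (A B C : finType) (f : Om -> A) (g : Om -> B) (h : Om -> C) :
  determines P (rvpair f g) h -> determines P (rvpair g f) h.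
Proof.
apply: determines_trans; apply: determines_pair; [apply: determines_snd|apply: determines_fst].
Qed.

Hypothesis P_ge0 : forall w, 0 <= P w.

Lemma entropy_le_determines (A B : finType) (g : Om -> B) (f : Om -> A) :
  determines P g f -> entropy P f <= entropy P g.
Proof.
move=> gf; rewrite !entropyE lerN2 ler_sum // => w _.
have := P_ge0 w; rewrite le0r => /orP[/eqP->|Pw_gt0]; first by rewrite !mul0r.
rewrite ler_pM2l // ler_ln ?posrE ?pmf_gt0 //.
rewrite /pmf big_mkcond [leRHS]big_mkcond /= ler_sum // => w' _.
case: eqP => [gw'|_]; last by case: ifP.
have := P_ge0 w'; rewrite le0r => /orP[/eqP->|Pw'_gt0]; first by case: ifP.
by rewrite (gf w' w) ?eqxx.
Qed.

Lemma entropy_eq_determines (A B : finType) (g : Om -> B) (f : Om -> A) :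
  determines P g f -> determines P f g -> entropy P f = entropy P g.
Proof. by move=> gf fg; apply/eqP; rewrite eq_le !entropy_le_determines. Qed.

Lemma entropy_eq_comp (A B : finType) (f : Om -> A) (g : Om -> B)
    (phi : B -> A) (psi : A -> B) :
  (forall w, f w = phi (g w)) -> (forall w, g w = psi (f w)) -> entropy P f = entropy P g.
Proof.
by move=> fE gE; apply: entropy_eq_determines => w w' _ _ e; [rewrite !fE e | rewrite !gE e].
Qed.

End Determines.

Arguments determines_refl {R Om P A f}.

(* Vanishes where [pmf P h] does, since [x / 0 = 0]. *)
Definition cond_indep_pmf (R : realType) (Om A B C : finType) (P : Om -> R)
  (f : Om -> A) (g : Om -> B) (h : Om -> C) (v : A * (B * C)) : R :=
  pmf P (rvpair f h) (v.1, v.2.2) * pmf P (rvpair g h) v.2 / pmf P h v.2.2.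

Section ConditionalMutualInformation.
Variables (R : realType) (Om A B C : finType) (P : Om -> R).
Hypothesis P_ge0 : forall w, 0 <= P w.
Variables (f : Om -> A) (g : Om -> B) (h : Om -> C).
Local Notation pF := (pmf P (rvpair f (rvpair g h))).
Local Notation r := (cond_indep_pmf P f g h).

Lemma sum_cond_indep_pmf : \sum_v r v = \sum_w P w.
Proof.
rewrite -(sum_pmf P h) sum_prod; under eq_bigr do rewrite sum_prod exchange_big.
rewrite exchange_big; apply: eq_bigr => c _ /=.
rewrite /cond_indep_pmf /=; under eq_bigr do rewrite -mulr_suml -mulr_sumr.
rewrite -mulr_suml -mulr_suml !sum_pmf_pair.
by have [->|ph_neq0] := eqVneq (pmf P h c) 0; rewrite ?mul0r ?mulfK.
Qed.

Lemma cond_indep_pmf_ge0 v : 0 <= r v.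
Proof. by rewrite divr_ge0 ?mulr_ge0 ?pmf_ge0. Qed.

Lemma cond_indep_pmf_gt0 v : 0 < pF v -> 0 < r v.
Proof.
case: v => a [b c] pF_gt0.
rewrite divr_gt0 ?mulr_gt0 //; apply: lt_le_trans pF_gt0 _.
- exact: (le_pmf_comp P_ge0 (phi := fun v => (v.1, v.2.2))).
- exact: (le_pmf_comp P_ge0 (phi := snd)).
- exact: (le_pmf_comp P_ge0 (phi := fun v => v.2.2)).
Qed.

Lemma condMI_relative_entropy : condMI P f g h = relative_entropy pF r.
Proof.
pose F := rvpair f (rvpair g h).
have log_split w : P w * ln (pF (F w) / r (F w)) =
    P w * ln (pF (F w)) + P w * ln (pmf P h (h w))
    - P w * ln (pmf P (rvpair f h) (rvpair f h w))
    - P w * ln (pmf P (rvpair g h) (rvpair g h w)).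
  have := P_ge0 w; rewrite le0r => /orP[/eqP->|Pw_gt0]; first by rewrite !mul0r !addr0 !subr0.
  rewrite /cond_indep_pmf /= ln_div ?lnM ?lnV ?posrE ?mulr_gt0 ?divr_gt0 ?invr_gt0 ?pmf_gt0 //.
  by ring.
rewrite /relative_entropy sum_pmf_mul (eq_bigr _ (fun w _ => log_split w)).
rewrite /condMI /condH !entropyE !sumrB big_split /=; ring.
Qed.

Lemma condMI_ge0 : 0 <= condMI P f g h.
Proof.
rewrite condMI_relative_entropy relative_entropy_ge0 //.
- exact: pmf_ge0.
- exact: cond_indep_pmf_ge0.
- by rewrite sum_cond_indep_pmf sum_pmf.
- exact: cond_indep_pmf_gt0.
Qed.

Let cond_indep_factorP :
  pF =1 r <-> forall a b c,
    pF (a, (b, c)) * pmf P h c = pmf P (rvpair f h) (a, c) * pmf P (rvpair g h) (b, c).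
Proof.
have ph0_pmf0 (D : finType) (d : Om -> D) (phi : D -> C) x :
    (forall w, h w = phi (d w)) -> pmf P h (phi x) = 0 -> pmf P d x = 0.
  move=> hE ph0; apply/eqP; rewrite eq_le pmf_ge0 // andbT -ph0.
  exact: le_pmf_comp.
split=> [e a b c | fac [a [b c]]]; rewrite ?e /cond_indep_pmf /=.
  have [ph0|ph_neq0] := eqVneq (pmf P h c) 0; last by rewrite divfK.
  by rewrite ph0 mulr0 (@ph0_pmf0 _ _ snd (a, c)) ?mul0r.
have [ph0|ph_neq0] := eqVneq (pmf P h c) 0.
  by rewrite ph0 invr0 mulr0 (@ph0_pmf0 _ _ (fun v => v.2.2) (a, (b, c))).
by apply: (mulIf ph_neq0); rewrite fac divfK.
Qed.

Lemma condMI_eq0P : condMI P f g h = 0 <-> forall a b c,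
  pF (a, (b, c)) * pmf P h c = pmf P (rvpair f h) (a, c) * pmf P (rvpair g h) (b, c).
Proof.
rewrite -cond_indep_factorP condMI_relative_entropy; split.
  apply: relative_entropy_eq0; rewrite ?sum_cond_indep_pmf ?sum_pmf //.
  - exact: pmf_ge0.
  - exact: cond_indep_pmf_ge0.
  - exact: cond_indep_pmf_gt0.
move=> e; rewrite /relative_entropy big1 // => v _; rewrite -e.
by have [->|pF_neq0] := eqVneq (pF v) 0; rewrite ?mul0r // divff // ln1 mulr0.
Qed.

End ConditionalMutualInformation.

Section InformationInequalities.
Variables (R : realType) (Om : finType) (P : Om -> R).
Hypotheses (P_ge0 : forall w, 0 <= P w) (P_sum1 : \sum_w P w = 1).

Lemma entropy_unit : entropy P (fun _ => tt) = 0.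
Proof.
by rewrite entropyE big1 ?oppr0 // => w _; rewrite pmf_unit P_sum1 ln1 mulr0.
Qed.

Lemma MI_sym (A B : finType) (f : Om -> A) (g : Om -> B) : MI P f g = MI P g f.
Proof.
rewrite /MI (_ : entropy P (rvpair f g) = entropy P (rvpair g f)); first by ring.
exact: (entropy_eq_comp P_ge0 (phi := fun v => (v.2, v.1)) (psi := fun v => (v.2, v.1))).
Qed.

Lemma condMI_unit (A B : finType) (f : Om -> A) (g : Om -> B) :
  condMI P f g (fun _ => tt) = MI P f g.
Proof.
have pair_unit (D : finType) (d : Om -> D) : entropy P (rvpair d (fun _ => tt)) = entropy P d.
  exact: (entropy_eq_comp P_ge0 (phi := fun x => (x, tt)) (psi := fst)).
rewrite /condMI /condH /MI !pair_unit entropy_unit.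
have -> : entropy P (rvpair f (rvpair g (fun _ => tt))) = entropy P (rvpair f g).
  exact: (entropy_eq_comp P_ge0 (phi := fun v => (v.1, (v.2, tt))) (psi := fun v => (v.1, v.2.1))).
by ring.
Qed.

Lemma MI_ge0 (A B : finType) (f : Om -> A) (g : Om -> B) : 0 <= MI P f g.
Proof. by rewrite -condMI_unit condMI_ge0. Qed.

Lemma condH_le_entropy (A B : finType) (f : Om -> A) (g : Om -> B) :
  condH P f g <= entropy P f.
Proof. by have := MI_ge0 f g; rewrite /MI /condH; lra. Qed.

Lemma condH_congr (A B B' : finType) (f : Om -> A) (g : Om -> B) (g' : Om -> B') :
  determines P g g' -> determines P g' g -> condH P f g = condH P f g'.
Proof.
move=> gg' g'g; rewrite /condH (entropy_eq_determines P_ge0 gg' g'g).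
congr (_ - _); apply: entropy_eq_determines => //.
  apply: determines_pair; first exact: determines_fst.
  by apply: (determines_trans _ g'g); apply: determines_snd.
apply: determines_pair; first exact: determines_fst.
by apply: (determines_trans _ gg'); apply: determines_snd.
Qed.

Lemma condH_pair_determined (A B C : finType) (f : Om -> A) (g : Om -> B) (h : Om -> C) :
  determines P g h -> condH P f (rvpair g h) = condH P f g.
Proof.
move=> gh; apply: condH_congr; first exact: determines_fst.
by apply: determines_pair => //; apply: determines_refl.
Qed.

Lemma condH_le_determines (A B S : finType) (a : Om -> A) (g : Om -> B) (s : Om -> S) :
  determines P (rvpair a g) s -> condH P s g <= condH P a g.
Proof.
move=> ag_s; rewrite /condH lerD2r; apply: entropy_le_determines => //.
by apply: determines_pair => //; apply: determines_snd.
Qed.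

Lemma condMI_le_determines (A U B C : finType) (a : Om -> A) (u : Om -> U)
    (g : Om -> B) (h : Om -> C) :
  determines P (rvpair a h) u -> condMI P u g h <= condMI P a g h.
Proof.
move=> ah_u; have := condMI_ge0 P_ge0 a g (rvpair u h); rewrite /condMI /condH.
have agh_u : determines P (rvpair a (rvpair g h)) u.
  by apply: (determines_trans _ ah_u); exact: (determines_comp (fun v => (v.1, v.2.2))).
have -> : entropy P (rvpair a (rvpair u h)) = entropy P (rvpair a h).
  apply: entropy_eq_determines => //; last exact: (determines_comp (fun v => (v.1, v.2.2))).
  apply: determines_pair; first exact: determines_fst.
  by apply: determines_pair => //; apply: determines_snd.
have -> : entropy P (rvpair a (rvpair g (rvpair u h))) = entropy P (rvpair a (rvpair g h)).
  apply: entropy_eq_determines => //.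
    apply: determines_pair; first exact: determines_fst.
    apply: determines_pair; first exact: (determines_comp (fun v => v.2.1)).
    by apply: determines_pair => //; exact: (determines_comp (fun v => v.2.2)).
  exact: (determines_comp (fun v => (v.1, (v.2.1, v.2.2.2)))).
have -> : entropy P (rvpair g (rvpair u h)) = entropy P (rvpair u (rvpair g h)).
  exact: (entropy_eq_comp P_ge0 (phi := fun v => (v.2.1, (v.1, v.2.2)))
    (psi := fun v => (v.2.1, (v.1, v.2.2)))).
lra.
Qed.

Lemma determines_of_condH_eq0 (A B : finType) (f : Om -> A) (g : Om -> B) :
  condH P f g = 0 -> determines P g f.
Proof.
move=> H0; have /(condMI_eq0P P_ge0) factor : condMI P f f g = 0.
  rewrite /condMI H0 /condH (_ : entropy P (rvpair f (rvpair f g)) = entropy P (rvpair f g)).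
    by rewrite subrr subr0.
  exact: (entropy_eq_comp P_ge0 (phi := fun v => (v.1, v)) (psi := snd)).
move=> w w' Pw_gt0 Pw'_gt0 gE; apply/eqP/negPn/negP => fw_neq.
have := factor (f w) (f w') (g w); rewrite [in X in X = _]/pmf big_pred0 ?mul0r.
  rewrite {2}gE; apply/eqP; rewrite eq_sym mulf_neq0 // gt_eqF //.
    exact: pmf_gt0.
  exact: pmf_gt0.
by move=> w''; apply/eqP => -[e1 e2 _]; move: fw_neq; rewrite -e1 -e2 eqxx.
Qed.

End InformationInequalities.

Section ShareEntropyBound.
Variables (R : realType) (Om : finType) (P : Om -> R).
Hypotheses (P_ge0 : forall w, 0 <= P w) (P_sum1 : \sum_w P w = 1).
Variables (Ta Tt Tv TT Tu Tz Ts : finType).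
(* [a] is the share being bounded, [t] and [v] the other two shares, [T] the pair (v, t)
   held by the party recovering [z], [u] the secret recovered from (a, t), and [s] the
   secrets recovered from (a, T). *)
Variables (a : Om -> Ta) (t : Om -> Tt) (v : Om -> Tv) (T : Om -> TT).
Variables (u : Om -> Tu) (z : Om -> Tz) (s : Om -> Ts).
Hypotheses (at_u : determines P (rvpair a t) u) (T_z : determines P T z).
Hypotheses (aT_s : determines P (rvpair a T) s).
Hypotheses (T_vt : determines P T (rvpair v t)) (vt_T : determines P (rvpair v t) T).
Hypotheses (private_s : condMI P s T z = 0) (indep_ut : MI P u t = 0).

Let private_condH_le : condH P s z <= condH P a T.
Proof.
have <- : condH P s T = condH P s z.
  by move: private_s; rewrite /condMI condH_pair_determined //; lra.
exact: condH_le_determines.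
Qed.

Let recovered_MI_le : MI P u z <= condH P a t - condH P a T.
Proof.
have MI_le : MI P u z <= condMI P u v t.
  have := condMI_ge0 P_ge0 u T z; have := indep_ut.
  rewrite /condMI /MI (condH_pair_determined P_ge0 _ T_z) (condH_congr P_ge0 _ T_vt vt_T).
  rewrite /condH; lra.
apply: (le_trans MI_le); apply: le_trans (condMI_le_determines P_ge0 _ at_u) _.
by rewrite /condMI (condH_congr P_ge0 _ T_vt vt_T).
Qed.

Lemma MI_add_condH_le_entropy : MI P u z + condH P s z <= entropy P a.
Proof.
have := condH_le_entropy P_ge0 P_sum1 a t.
have := private_condH_le; have := recovered_MI_le; lra.
Qed.

End ShareEntropyBound.

Definition kernel_joint (R : realType) (S M : finType) (p : S -> R) (K : S -> M -> R)
  : S * M -> R := fun w => p w.1 * K w.1 w.2.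

Section KernelJoint.
Variables (R : realType) (S M : finType) (K : S -> M -> R).
Hypothesis K_dist : forall s, is_dist (K s).

Lemma kernel_joint_dist (p : S -> R) : is_dist p -> is_dist (kernel_joint p K).
Proof.
case=> p_ge0 p_sum1; split=> [w|]; first by rewrite mulr_ge0 //; case: (K_dist w.1).
rewrite -p_sum1 sum_prod; apply: eq_bigr => s _.
by rewrite /kernel_joint /= -mulr_sumr; case: (K_dist s) => _ ->; rewrite mulr1.
Qed.

Lemma pmf_kernel_joint (p : S -> R) (V A B : finType) (F : S * M -> V) v
    (alpha : S -> A) a (beta : M -> B) b :
  (forall s m, (F (s, m) == v) = (alpha s == a) && (beta m == b)) ->
  pmf (kernel_joint p K) F v = \sum_(s | alpha s == a) p s * pmf (K s) beta b.
Proof.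
move=> FE; rewrite /pmf big_mkcond sum_prod [RHS]big_mkcond.
apply: eq_bigr => s _; case: ifP => alpha_s.
  rewrite mulr_sumr [RHS]big_mkcond; apply: eq_bigr => m _.
  by rewrite FE alpha_s; case: ifP.
by rewrite big1 // => m _; rewrite FE alpha_s.
Qed.

Lemma pmf_kernel_joint_fst (p : S -> R) (A : finType) (f : S -> A) :
  pmf (kernel_joint p K) (fun w => f w.1) =1 pmf p f.
Proof.
move=> a; rewrite (@pmf_kernel_joint _ _ _ _ _ _ f a (fun _ => tt) tt); last first.
  by move=> s m; rewrite andbT.
by apply: eq_bigr => s _; rewrite pmf_unit; case: (K_dist s) => _ ->; rewrite mulr1.
Qed.

Lemma entropy_kernel_joint_fst (p : S -> R) (A : finType) (f : S -> A) :
  entropy (kernel_joint p K) (fun w => f w.1) = entropy p f.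
Proof. by rewrite /entropy; under eq_bigr do rewrite pmf_kernel_joint_fst. Qed.

Lemma MI_kernel_joint_fst (p : S -> R) (A B : finType) (f : S -> A) (g : S -> B) :
  MI (kernel_joint p K) (fun w => f w.1) (fun w => g w.1) = MI p f g.
Proof. by rewrite /MI -!(entropy_kernel_joint_fst p). Qed.

Lemma condH_kernel_joint_fst (p : S -> R) (A B : finType) (f : S -> A) (g : S -> B) :
  condH (kernel_joint p K) (fun w => f w.1) (fun w => g w.1) = condH p f g.
Proof. by rewrite /condH -!(entropy_kernel_joint_fst p). Qed.

Lemma determines_kernel_joint (p q : S -> R) (B H : finType) (fs : M -> B) (h : S -> H) :
  is_dist p -> (forall s, 0 < p s) -> is_dist q ->
  condH (kernel_joint p K) (fun w => h w.1) (fun w => fs w.2) = 0 ->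
  determines (kernel_joint q K) (fun w => fs w.2) (fun w => h w.1).
Proof.
move=> p_dist p_gt0 [q_ge0 _] H0.
have [P_ge0 _] := kernel_joint_dist p_dist.
have K_gt0 w : 0 < kernel_joint q K w -> 0 < K w.1 w.2.
  apply: contraTT; rewrite -!leNgt => K_le0; exact: mulr_ge0_le0.
move=> w w' Qw_gt0 Qw'_gt0; apply: (determines_of_condH_eq0 P_ge0 H0).
  by rewrite mulr_gt0 ?K_gt0.
by rewrite mulr_gt0 ?K_gt0.
Qed.

Lemma pmf_kernel_private (p : S -> R) (B G H : finType)
    (fs : M -> B) (g : S -> G) (h : S -> H) :
  is_dist p -> (forall s, 0 < p s) -> injective (fun s => (g s, h s)) ->
  condMI (kernel_joint p K) (fun w => fs w.2) (fun w => g w.1) (fun w => h w.1) = 0 ->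
  forall s s', h s = h s' -> pmf (K s) fs =1 pmf (K s') fs.
Proof.
move=> p_dist p_gt0 gh_inj private.
have [P_ge0 _] := kernel_joint_dist p_dist.
have gh_eq s x : ((g x, h x) == (g s, h s)) = (x == s) by apply: (inj_eq gh_inj).
have pmf_K s b : pmf (K s) fs b =
    (\sum_(x | h x == h s) p x * pmf (K x) fs b) / pmf p h (h s).
  have := (condMI_eq0P P_ge0 _ _ _).1 private b (g s) (h s).
  rewrite (@pmf_kernel_joint _ _ _ _ _ _ id s fs b); last first.
    by move=> x m; rewrite /rvpair /= !xpair_eqE andbC -xpair_eqE gh_eq.
  rewrite pmf_kernel_joint_fst (pmf_kernel_joint_fst _ (fun x => (g x, h x))).
  rewrite (@pmf_kernel_joint _ _ _ _ _ _ h (h s) fs b); last first.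
    by move=> x m; rewrite /rvpair /= xpair_eqE andbC.
  rewrite big_pred1_eq.
  have -> : pmf p (fun x => (g x, h x)) (g s, h s) = p s.
    by rewrite /pmf (eq_bigl (pred1 s)) ?big_pred1_eq // => x; rewrite gh_eq.
  have ps_neq0 : p s != 0 by rewrite gt_eqF.
  have ph_neq0 : pmf p h (h s) != 0.
    by rewrite gt_eqF // (lt_le_trans (p_gt0 s)) // le_prob_pmf //; case: p_dist.
  move=> e; apply/(mulIf ph_neq0); rewrite divfK //.
  by apply/(mulfI ps_neq0); rewrite mulrA e mulrC.
by move=> s s' hE b; rewrite !pmf_K hE.
Qed.

Section AnyInput.
Variables (q : S -> R).
Hypothesis q_dist : is_dist q.
Variables (B G : finType) (fs : M -> B) (g : S -> G).

Lemma condMI_kernel_joint_eq0 (H : finType) (h : S -> H) :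
  (forall s s', h s = h s' -> pmf (K s) fs =1 pmf (K s') fs) ->
  condMI (kernel_joint q K) (fun w => g w.1) (fun w => fs w.2) (fun w => h w.1) = 0.
Proof.
move=> private; have [Q_ge0 _] := kernel_joint_dist q_dist.
apply/(condMI_eq0P Q_ge0) => a b c.
rewrite !pmf_kernel_joint_fst (pmf_kernel_joint_fst _ (fun x => (g x, h x))).
rewrite (@pmf_kernel_joint _ _ _ _ _ _ (fun x => (g x, h x)) (a, c) fs b); last first.
  by move=> x m; rewrite /rvpair /= !xpair_eqE andbA andbAC.
rewrite (@pmf_kernel_joint _ _ _ _ _ _ h c fs b); last first.
  by move=> x m; rewrite /rvpair /= xpair_eqE andbC.
case: (pickP (fun x => h x == c)) => [x0 /eqP hx0|no_c]; last first.
  have sum_c0 (F : S -> R) : \sum_(x | h x == c) F x = 0 by apply: big_pred0.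
  by rewrite [pmf q h c]sum_c0 sum_c0 !mulr0.
have pmf_K x : h x = c -> pmf (K x) fs b = pmf (K x0) fs b.
  by move=> hx; apply: private; rewrite hx hx0.
rewrite (eq_bigr (fun x => q x * pmf (K x0) fs b)) => [|x /eqP[_ /pmf_K ->] //].
rewrite [in RHS](eq_bigr (fun x => q x * pmf (K x0) fs b)) => [|x /eqP /pmf_K ->] //.
by rewrite -!mulr_suml -/(pmf q h c) -/(pmf q (fun x => (g x, h x)) (a, c)); ring.
Qed.

Lemma MI_kernel_joint_eq0 :
  (forall s s', pmf (K s) fs =1 pmf (K s') fs) ->
  MI (kernel_joint q K) (fun w => g w.1) (fun w => fs w.2) = 0.
Proof.
move=> const; have [Q_ge0 Q_sum1] := kernel_joint_dist q_dist.
rewrite -(condMI_unit Q_ge0 Q_sum1).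
exact: (condMI_kernel_joint_eq0 (h := fun _ => tt)).
Qed.

Lemma entropy_kernel_joint_snd (p : S -> R) :
  is_dist p -> (forall s s', pmf (K s) fs =1 pmf (K s') fs) ->
  entropy (kernel_joint p K) (fun w => fs w.2) = entropy (kernel_joint q K) (fun w => fs w.2).
Proof.
move=> [_ p_sum1] const; case: q_dist => _ q_sum1.
have pmf_snd (r : S -> R) b :
    pmf (kernel_joint r K) (fun w => fs w.2) b = \sum_s r s * pmf (K s) fs b.
  by rewrite (@pmf_kernel_joint _ _ _ _ _ _ (fun _ => tt) tt fs b).
suff pmf_pq b : \sum_s p s * pmf (K s) fs b = \sum_s q s * pmf (K s) fs b.
  by rewrite /entropy; congr (- _); apply: eq_bigr => b _; rewrite !pmf_snd pmf_pq.
transitivity (\sum_s \sum_x p s * q x * pmf (K x) fs b).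
  apply: eq_bigr => s _; rewrite -[LHS]mulr1 -q_sum1 mulr_sumr; apply: eq_bigr => x _.
  by rewrite (const s x); ring.
rewrite exchange_big; apply: eq_bigr => x _.
by rewrite -mulr_suml -mulr_suml p_sum1 mul1r.
Qed.

End AnyInput.

End KernelJoint.

Lemma eq_pmf_comp (R : realType) (Om Om' A B : finType) (P : Om -> R) (P' : Om' -> R)
    (f : Om -> A) (f' : Om' -> A) (phi : A -> B) :
  pmf P f =1 pmf P' f' -> pmf P (fun w => phi (f w)) =1 pmf P' (fun w => phi (f' w)).
Proof. by move=> e b; rewrite !pmf_comp; apply: eq_bigr => a _. Qed.

Section Scheme.
Variables (R : realType) (X Y Z M12 M23 M31 : finType).
Variables (p : X * Y * Z -> R) (K : X * Y * Z -> M12 * M23 * M31 -> R).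
Hypotheses (p_dist : is_dist p) (p_gt0 : forall s, 0 < p s) (K_CMSS : is_CMSS p K).

Local Notation sX := (@sX X Y Z).
Local Notation sY := (@sY X Y Z).
Local Notation sZ := (@sZ X Y Z).
Local Notation jX := (@jX X Y Z M12 M23 M31).
Local Notation jY := (@jY X Y Z M12 M23 M31).
Local Notation jZ := (@jZ X Y Z M12 M23 M31).
Local Notation jM12 := (@jM12 X Y Z M12 M23 M31).
Local Notation jM23 := (@jM23 X Y Z M12 M23 M31).
Local Notation jM31 := (@jM31 X Y Z M12 M23 M31).

Let K_dist : forall s, is_dist (K s). Proof. by case: K_CMSS. Qed.

Let share_pair_x s s' : s.1.1 = s'.1.1 ->
  pmf (K s) (fun m => (m.1.1, m.2)) =1 pmf (K s') (fun m => (m.1.1, m.2)).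
Proof.
case: K_CMSS => _ _ _ _ [private _ _].
apply: (pmf_kernel_private K_dist (fs := fun m => (m.1.1, m.2)) (g := fun s => (s.1.2, s.2))
  (h := fun s => s.1.1) p_dist p_gt0 _ private).
by move=> [[? ?] ?] [[? ?] ?] [-> -> ->].
Qed.

Let share_pair_y s s' : s.1.2 = s'.1.2 ->
  pmf (K s) (fun m => (m.1.1, m.1.2)) =1 pmf (K s') (fun m => (m.1.1, m.1.2)).
Proof.
case: K_CMSS => _ _ _ _ [_ private _].
apply: (pmf_kernel_private K_dist (fs := fun m => (m.1.1, m.1.2)) (g := fun s => (s.1.1, s.2))
  (h := fun s => s.1.2) p_dist p_gt0 _ private).
by move=> [[? ?] ?] [[? ?] ?] [-> -> ->].
Qed.

Let share_pair_z s s' : s.2 = s'.2 ->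
  pmf (K s) (fun m => (m.1.2, m.2)) =1 pmf (K s') (fun m => (m.1.2, m.2)).
Proof.
case: K_CMSS => _ _ _ _ [_ _ private].
apply: (pmf_kernel_private K_dist (fs := fun m => (m.1.2, m.2)) (g := fun s => (s.1.1, s.1.2))
  (h := fun s => s.2) p_dist p_gt0 _ private).
by move=> [[? ?] ?] [[? ?] ?] [-> -> ->].
Qed.

Let share12_const s s' : pmf (K s) (fun m => m.1.1) =1 pmf (K s') (fun m => m.1.1).
Proof.
pose mid := ((s.1.1, s'.1.2), s.2).
move=> b; rewrite (eq_pmf_comp fst (@share_pair_x s mid erefl)).
exact: (eq_pmf_comp fst (@share_pair_y mid s' erefl)).
Qed.

Let share23_const s s' : pmf (K s) (fun m => m.1.2) =1 pmf (K s') (fun m => m.1.2).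
Proof.
pose mid := (s.1, s'.2).
move=> b; rewrite (eq_pmf_comp snd (@share_pair_y s mid erefl)).
exact: (eq_pmf_comp fst (@share_pair_z mid s' erefl)).
Qed.

Let share31_const s s' : pmf (K s) (fun m => m.2) =1 pmf (K s') (fun m => m.2).
Proof.
pose mid := (s.1, s'.2).
move=> b; rewrite (eq_pmf_comp snd (@share_pair_x s mid erefl)).
exact: (eq_pmf_comp snd (@share_pair_z mid s' erefl)).
Qed.

Section AnyInput.
Variables (q : X * Y * Z -> R) (q_dist : is_dist q).
Local Notation Q := (kernel_joint q K).

Let Q_ge0 : forall w, 0 <= Q w. Proof. by case: (kernel_joint_dist K_dist q_dist). Qed.
Let Q_sum1 : \sum_w Q w = 1. Proof. by case: (kernel_joint_dist K_dist q_dist). Qed.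

Let recover_x : determines Q (rvpair jM12 jM31) jX.
Proof.
case: K_CMSS => _ correct _ _ _.
exact: (determines_kernel_joint K_dist (fs := fun m => (m.1.1, m.2)) (h := fun s => s.1.1)
  p_dist p_gt0 q_dist correct).
Qed.

Let recover_y : determines Q (rvpair jM12 jM23) jY.
Proof.
case: K_CMSS => _ _ correct _ _.
exact: (determines_kernel_joint K_dist (fs := fun m => (m.1.1, m.1.2)) (h := fun s => s.1.2)
  p_dist p_gt0 q_dist correct).
Qed.

Let recover_z : determines Q (rvpair jM23 jM31) jZ.
Proof.
case: K_CMSS => _ _ _ correct _.
exact: (determines_kernel_joint K_dist (fs := fun m => (m.1.2, m.2)) (h := fun s => s.2)
  p_dist p_gt0 q_dist correct).
Qed.

Let private_x : condMI Q (rvpair jY jZ) (rvpair jM12 jM31) jX = 0.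
Proof.
exact: (condMI_kernel_joint_eq0 K_dist q_dist (fun s => (s.1.2, s.2))
  (fs := fun m => (m.1.1, m.2)) (h := fun s => s.1.1) share_pair_x).
Qed.

Let private_y : condMI Q (rvpair jX jZ) (rvpair jM12 jM23) jY = 0.
Proof.
exact: (condMI_kernel_joint_eq0 K_dist q_dist (fun s => (s.1.1, s.2))
  (fs := fun m => (m.1.1, m.1.2)) (h := fun s => s.1.2) share_pair_y).
Qed.

Let private_z : condMI Q (rvpair jX jY) (rvpair jM23 jM31) jZ = 0.
Proof.
exact: (condMI_kernel_joint_eq0 K_dist q_dist (fun s => (s.1.1, s.1.2))
  (fs := fun m => (m.1.2, m.2)) (h := fun s => s.2) share_pair_z).
Qed.

Let indep12 (G : finType) (g : X * Y * Z -> G) : MI Q (fun w => g w.1) jM12 = 0.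
Proof. exact: (MI_kernel_joint_eq0 K_dist q_dist (fs := fun m => m.1.1) g share12_const). Qed.

Let indep23 (G : finType) (g : X * Y * Z -> G) : MI Q (fun w => g w.1) jM23 = 0.
Proof. exact: (MI_kernel_joint_eq0 K_dist q_dist (fs := fun m => m.1.2) g share23_const). Qed.

Let indep31 (G : finType) (g : X * Y * Z -> G) : MI Q (fun w => g w.1) jM31 = 0.
Proof. exact: (MI_kernel_joint_eq0 K_dist q_dist (fs := fun m => m.2) g share31_const). Qed.

(* [joint p K] is [kernel_joint p K] by unfolding. *)
Let entropy_share12 : entropy (joint p K) jM12 = entropy Q jM12.
Proof. exact: (entropy_kernel_joint_snd q_dist (fs := fun m => m.1.1) p_dist share12_const). Qed.

Let entropy_share23 : entropy (joint p K) jM23 = entropy Q jM23.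
Proof. exact: (entropy_kernel_joint_snd q_dist (fs := fun m => m.1.2) p_dist share23_const). Qed.

Let entropy_share31 : entropy (joint p K) jM31 = entropy Q jM31.
Proof. exact: (entropy_kernel_joint_snd q_dist (fs := fun m => m.2) p_dist share31_const). Qed.

Lemma share12_entropy_bound :
  MI q sX sZ + condH q (rvpair sX sY) sZ
    <= entropy (joint p K) jM12 /\
  MI q sY sZ + condH q (rvpair sX sY) sZ
    <= entropy (joint p K) jM12.
Proof.
have recover_xy : determines Q (rvpair jM12 (rvpair jM23 jM31)) (rvpair jX jY).
  apply: determines_pair.
    by apply: (determines_trans _ recover_x); exact: (determines_comp (fun v => (v.1, v.2.2))).
  by apply: (determines_trans _ recover_y); exact: (determines_comp (fun v => (v.1, v.2.1))).
rewrite entropy_share12 -!(MI_kernel_joint_fst K_dist) -(condH_kernel_joint_fst K_dist).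
split.
  exact: (MI_add_condH_le_entropy Q_ge0 Q_sum1 recover_x recover_z recover_xy
    determines_refl determines_refl private_z (indep31 sX)).
exact: (MI_add_condH_le_entropy Q_ge0 Q_sum1 recover_y recover_z recover_xy
  (determines_swap determines_refl) (determines_swap determines_refl)
  private_z (indep23 sY)).
Qed.

Lemma share23_entropy_bound :
  MI q sX sZ + condH q (rvpair sY sZ) sX
    <= entropy (joint p K) jM23 /\
  MI q sX sY + condH q (rvpair sY sZ) sX
    <= entropy (joint p K) jM23.
Proof.
have recover_yz : determines Q (rvpair jM23 (rvpair jM12 jM31)) (rvpair jY jZ).
  apply: determines_pair.
    by apply: (determines_trans _ recover_y); exact: (determines_comp (fun v => (v.2.1, v.1))).
  by apply: (determines_trans _ recover_z); exact: (determines_comp (fun v => (v.1, v.2.2))).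
have [q_ge0 _] := q_dist.
rewrite entropy_share23 !(MI_sym q_ge0 sX).
rewrite -!(MI_kernel_joint_fst K_dist) -(condH_kernel_joint_fst K_dist).
split.
  exact: (MI_add_condH_le_entropy Q_ge0 Q_sum1 recover_z recover_x recover_yz
    determines_refl determines_refl private_x (indep31 sZ)).
exact: (MI_add_condH_le_entropy Q_ge0 Q_sum1 (determines_swap recover_y) recover_x recover_yz
  (determines_swap determines_refl) (determines_swap determines_refl)
  private_x (indep12 sY)).
Qed.

Lemma share31_entropy_bound :
  MI q sY sZ + condH q (rvpair sX sZ) sY
    <= entropy (joint p K) jM31 /\
  MI q sX sY + condH q (rvpair sX sZ) sY
    <= entropy (joint p K) jM31.
Proof.
have recover_xz : determines Q (rvpair jM31 (rvpair jM12 jM23)) (rvpair jX jZ).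
  apply: determines_pair.
    by apply: (determines_trans _ recover_x); exact: (determines_comp (fun v => (v.2.1, v.1))).
  by apply: (determines_trans _ recover_z); exact: (determines_comp (fun v => (v.2.2, v.1))).
have [q_ge0 _] := q_dist.
rewrite entropy_share31 (MI_sym q_ge0 sY).
rewrite -!(MI_kernel_joint_fst K_dist) -(condH_kernel_joint_fst K_dist).
split.
  exact: (MI_add_condH_le_entropy Q_ge0 Q_sum1 (determines_swap recover_z) recover_y recover_xz
    determines_refl determines_refl private_y (indep23 sZ)).
exact: (MI_add_condH_le_entropy Q_ge0 Q_sum1 (determines_swap recover_x) recover_y recover_xz
  (determines_swap determines_refl) (determines_swap determines_refl)
  private_y (indep12 sX)).
Qed.

End AnyInput.

End Scheme.

Lemma RI_le_MI (R : realType) (Om A B : finType) (P : Om -> R) (u : Om -> A) (v : Om -> B) :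
  RI P u v <= MI P u v.
Proof.
rewrite /RI /common_entropy gerBl.
by apply: (big_rec (fun x => 0 <= x)) => // fg x _ x_ge0; rewrite le_max x_ge0 orbT.
Qed.

Theorem theorem11 (R : realType) (X Y Z M12 M23 M31 : finType)
  (p : X * Y * Z -> R) (K : X * Y * Z -> M12 * M23 * M31 -> R) :
  is_dist p -> (forall s, 0 < p s) -> is_CMSS p K ->
  let P := joint p K in
  (* (1) *)
  (forall q : X * Y * Z -> R, is_dist q ->
     char_graph_connected q (@sX X Y Z) (@sY X Y Z) ->
     RI q (@sX X Y Z) (@sZ X Y Z) + condH q (rvpair (@sX X Y Z) (@sY X Y Z)) (@sZ X Y Z)
       <= entropy P (@jM12 X Y Z M12 M23 M31) /\
     RI q (@sY X Y Z) (@sZ X Y Z) + condH q (rvpair (@sX X Y Z) (@sY X Y Z)) (@sZ X Y Z)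
       <= entropy P (@jM12 X Y Z M12 M23 M31)) /\
  (* (2) *)
  (forall q : X * Y * Z -> R, is_dist q ->
     char_graph_connected q (@sY X Y Z) (@sZ X Y Z) ->
     RI q (@sX X Y Z) (@sZ X Y Z) + condH q (rvpair (@sY X Y Z) (@sZ X Y Z)) (@sX X Y Z)
       <= entropy P (@jM23 X Y Z M12 M23 M31) /\
     RI q (@sX X Y Z) (@sY X Y Z) + condH q (rvpair (@sY X Y Z) (@sZ X Y Z)) (@sX X Y Z)
       <= entropy P (@jM23 X Y Z M12 M23 M31)) /\
  (* (3) *)
  (forall q : X * Y * Z -> R, is_dist q ->
     char_graph_connected q (@sX X Y Z) (@sZ X Y Z) ->
     RI q (@sY X Y Z) (@sZ X Y Z) + condH q (rvpair (@sX X Y Z) (@sZ X Y Z)) (@sY X Y Z)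
       <= entropy P (@jM31 X Y Z M12 M23 M31) /\
     RI q (@sX X Y Z) (@sY X Y Z) + condH q (rvpair (@sX X Y Z) (@sZ X Y Z)) (@sY X Y Z)
       <= entropy P (@jM31 X Y Z M12 M23 M31)).
Proof.
move=> p_dist p_gt0 K_CMSS P.
have RI_bound (q : X * Y * Z -> R) (A B : finType) (u : X * Y * Z -> A) (v : X * Y * Z -> B) c e :
    MI q u v + c <= e -> RI q u v + c <= e.
  by apply: le_trans; rewrite lerD2r RI_le_MI.
split; [|split] => q q_dist _.
- have [bound_xz bound_yz] := share12_entropy_bound p_dist p_gt0 K_CMSS q_dist.
  by split; apply: RI_bound.
- have [bound_xz bound_xy] := share23_entropy_bound p_dist p_gt0 K_CMSS q_dist.
  by split; apply: RI_bound.
- have [bound_yz bound_xy] := share31_entropy_bound p_dist p_gt0 K_CMSS q_dist.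
  by split; apply: RI_bound.
Qed.
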